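(* Let $\Delta$ be a noncommutative discrete valuation ring with uniformiser $\pi$ and finite residue field $k=\Delta/(\pi)$. Let $n,r\ge1$ and let $1\le c_1\le c_2\le\cdots\le c_r\le n$ be integers. For $i\in\{1,\ldots,n\}$ let $M_i\subseteq\Delta^{r}$ (row vectors) be the left $\Delta$-submodule of vectors whose $s$-th entry lies in $\Delta$ if $i\le c_s$ and in $\pi\Delta$ if $i>c_s$; thus $M_1=\Delta^r\supseteq M_2\supseteq\cdots\supseteq M_n\supseteq\pi M_1$. For a finite colength left $\Delta$-submodule $X\subseteq M_1$ let $M_j(X)=(X\cap M_j)/\pi X$ for $j=1,\ldots,n$ and $M_{n+1}(X)=0$, giving a filtered $k$-vector space $M_*X: M_1(X)\supseteq\cdots\supseteq M_n(X)\supseteq M_{n+1}(X)=0$. Let $X_1\subseteq M_1$ be a finite colength submodule and $Y_1=X_1+\pi M_1$. Then $M_*X_1\cong M_*Y_1$ as filtered vector spaces.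
   Context: A noncommutative discrete valuation ring is a domain $\Delta$ with a normal regular element $\pi$ (uniformiser) such that $\pi\Delta=\Delta\pi$ is the Jacobson radical and $\Delta/(\pi)$ is a division ring, here assumed finite (hence a finite field $k$). Since $\pi\Delta=\Delta\pi$, each $M_j(X)$ is a $k$-vector space. An isomorphism of filtered vector spaces $V_*\to V'_*$ is a $k$-linear isomorphism $V_1\to V'_1$ mapping each $V_j$ onto $V'_j$. *)

From HB Require Import structures.
From mathcomp Require Import all_boot all_order all_algebra.
Set Implicit Arguments. Unset Strict Implicit. Unset Printing Implicit Defensive.
Import GRing.Theory.
Local Open Scope ring_scope.

Section NCDVR.
Variable D : nzRingType.

Definition inpiD (pi x : D) : Prop := exists d, x = pi * d.

Record ncDVR (pi : D) : Prop := {
  ncdvr_domain : forall a b : D, a * b = 0 -> a = 0 \/ b = 0;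
  ncdvr_regular : forall a : D, (pi * a = 0 -> a = 0) /\ (a * pi = 0 -> a = 0);
  ncdvr_normal_l : forall a : D, exists b, pi * a = b * pi;
  ncdvr_normal_r : forall a : D, exists b, a * pi = pi * b;
  (* pi D is the Jacobson radical: x in J iff 1 - a x is left invertible for all a *)
  ncdvr_jacobson : forall x : D,
      inpiD pi x <-> (forall a : D, exists u : D, u * (1 - a * x) = 1);
  (* D/(pi) is a division ring: nonzero, and every nonzero class is invertible *)
  ncdvr_residue_nontrivial : ~ inpiD pi 1;
  ncdvr_residue_division : forall a : D, ~ inpiD pi a ->
      exists b : D, inpiD pi (b * a - 1) /\ inpiD pi (a * b - 1);
  ncdvr_residue_finite : exists s : seq D,
      forall a : D, exists2 b, b \in s & inpiD pi (a - b)
}.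

Variable r : nat.
Notation V := 'rV[D]_r.

Definition lsubmod (X : V -> Prop) : Prop :=
  [/\ X 0, (forall u v, X u -> X v -> X (u + v)) & (forall (a : D) u, X u -> X (a *: u))].

Definition finite_colength (X : V -> Prop) : Prop :=
  exists s : seq V, forall v : V, exists2 w, w \in s & X (v - w).

Definition piM (pi : D) (X : V -> Prop) : V -> Prop :=
  fun v => exists x, X x /\ v = pi *: x.

Definition add_piM1 (pi : D) (X : V -> Prop) : V -> Prop :=
  fun v => exists x w, X x /\ v = x + pi *: w.

Definition Mi (pi : D) (c : 'I_r -> nat) (i : nat) : V -> Prop :=
  fun v => forall s : 'I_r, (i <= c s)%N \/ inpiD pi (v ord0 s).

(* representatives x of X whose class in X / pi X lies in
   M_j(X) = (X cap M_j) / pi X, i.e. x in (X cap M_j) + pi X *)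
Definition in_Mj (pi : D) (c : 'I_r -> nat) (j : nat) (X : V -> Prop) : V -> Prop :=
  fun v => exists x y, [/\ X x, Mi pi c j x, piM pi X y & v = x + y].

(* An isomorphism of filtered k-vector spaces M_*X -> M_*Y, written on
   representatives: phi : X -> Y induces a well-defined, injective, surjective,
   additive, k-linear (k = D/(pi) acting through representatives in D) map
   X/piX -> Y/piY mapping each M_j(X) onto M_j(Y) (j = 1..n; M_{n+1} = 0). *)
Definition filtered_iso (pi : D) (n : nat) (c : 'I_r -> nat) (X Y : V -> Prop) : Prop :=
  exists phi : V -> V,
  (forall x, X x -> Y (phi x)) /\
  [/\
      (forall x x', X x -> X x' -> (piM pi X (x - x') <-> piM pi Y (phi x - phi x'))),
      (forall x x', X x -> X x' -> piM pi Y (phi (x + x') - (phi x + phi x'))),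
      (forall (a : D) x, X x -> piM pi Y (phi (a *: x) - a *: phi x)),
      (forall y, Y y -> exists2 x, X x & piM pi Y (y - phi x))
    & (forall j : nat, (1 <= j <= n)%N -> forall x, X x ->
         (in_Mj pi c j X x <-> in_Mj pi c j Y (phi x)))].

End NCDVR.

From HB Require Import structures.
From mathcomp Require Import all_boot all_order all_algebra.
From Stdlib Require Import Classical ClassicalEpsilon.
Set Implicit Arguments. Unset Strict Implicit. Unset Printing Implicit Defensive.
Import GRing.Theory.
Local Open Scope ring_scope.

(* Reduction modulo [pi M_1] maps [X / pi X] and [Y / pi Y] onto the same space
   [Y / pi M_1], with kernels [(X cap pi M_1) / pi X] and [pi M_1 / pi Y], and
   these kernels have the same finite cardinality. So an isomorphism
   [X / pi X -> Y / pi Y] commuting with reduction modulo [pi M_1] can be built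
   one generator [v] of [X] at a time: [v] is sent to itself, or, if [v] is
   congruent modulo [pi M_1] to an element already treated, to the image of that
   element shifted by a kernel element not yet reached, which exists by the
   cardinality count. Since [pi M_1] lies in every [M_j], such an isomorphism
   respects the filtrations. *)

Section Submodules.
Variables (D : nzRingType) (r : nat).
Notation V := 'rV[D]_r.
Implicit Types (A B C E P Q : V -> Prop) (u v w : V).

Lemma lsubmod0 P : lsubmod P -> P 0.
Proof. by case. Qed.

Lemma lsubmodD P u v : lsubmod P -> P u -> P v -> P (u + v).
Proof. by case=> _ addP _; apply: addP. Qed.

Lemma lsubmodZ P a u : lsubmod P -> P u -> P (a *: u).
Proof. by case=> _ _ scaleP; apply: scaleP. Qed.

Lemma lsubmodN P u : lsubmod P -> P u -> P (- u).
Proof. by move=> hP Pu; rewrite -scaleN1r; apply: lsubmodZ. Qed.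

Lemma lsubmodB P u v : lsubmod P -> P u -> P v -> P (u - v).
Proof. by move=> hP Pu Pv; apply: lsubmodD (lsubmodN hP Pv). Qed.

Lemma lsubmod_subC P u v : lsubmod P -> P (u - v) -> P (v - u).
Proof. by move=> hP Puv; rewrite -opprB; apply: lsubmodN. Qed.

Lemma lsubmod_subT P u v w : lsubmod P -> P (u - v) -> P (v - w) -> P (u - w).
Proof. by move=> hP Puv Pvw; have := lsubmodD hP Puv Pvw; rewrite addrA subrK. Qed.

Lemma lsubmodDl P u v : lsubmod P -> P u -> (P (u + v) <-> P v).
Proof.
move=> hP Pu; split=> [Puv | Pv]; last exact: lsubmodD.
by have := lsubmodB hP Puv Pu; rewrite addrC addKr.
Qed.

Lemma lsubmodT : lsubmod (fun _ : V => True).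
Proof. by []. Qed.

Lemma finite_colengthS P Q :
  (forall v, P v -> Q v) -> finite_colength P -> finite_colength Q.
Proof. by move=> PQ [s hs]; exists s => v; have [w ws /PQ] := hs v; exists w. Qed.

Definition transversal A E (T : finType) (f : T -> V) : Prop :=
  [/\ forall t, A (f t), forall t t', E (f t - f t') -> t = t'
    & forall a, A a -> exists t, E (a - f t)].

Lemma mod_representatives A E (s : seq V) : lsubmod E -> exists l : seq V,
  [/\ forall x, x \in l -> A x,
      forall x y, x \in l -> y \in l -> E (x - y) -> x = y
    & forall a, A a -> (exists2 w, w \in s & E (a - w)) ->
        exists2 x, x \in l & E (a - x)].
Proof.
move=> hE; elim: s => [|w s [l [lA lI lC]]]; first by exists [::]; split=> // a _ [].
have [[a [Aa Eaw fresh_a]] | no_fresh] :=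
  classic (exists a, [/\ A a, E (a - w) & forall x, x \in l -> ~ E (a - x)]).
- exists (a :: l); split.
  + by move=> x; rewrite inE => /predU1P [-> | /lA].
  + move=> x y; rewrite !inE => /predU1P [-> | xl] /predU1P [-> | yl] //.
    * by move/fresh_a.
    * by move/(lsubmod_subC hE)/fresh_a.
    * exact: lI.
  + move=> b Ab [w']; rewrite inE => /predU1P [-> Ebw | ws Ebw].
      by exists a; [exact: mem_head | exact: lsubmod_subT hE Ebw (lsubmod_subC hE Eaw)].
    have [x xl Ebx] := lC b Ab (ex_intro2 _ _ w' ws Ebw).
    by exists x; rewrite // inE xl orbT.
- exists l; split=> // b Ab [w']; rewrite inE => /predU1P [-> Ebw | ws Ebw].
    apply: NNPP => no_x; apply: no_fresh; exists b; split=> // x xl Ebx.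
    by apply: no_x; exists x.
  exact: lC b Ab (ex_intro2 _ _ w' ws Ebw).
Qed.

Lemma transversal_exists A E : lsubmod E -> finite_colength E ->
  exists (T : finType) (f : T -> V), transversal A E f.
Proof.
move=> hE [s hs]; have [l [lA lI lC]] := mod_representatives A s hE.
exists (seq_sub l), val; split.
- by move=> t; apply/lA/valP.
- by move=> t t' /(lI _ _ (valP t) (valP t')) /val_inj.
- by move=> a Aa; have [x xl Eax] := lC a Aa (hs a); exists (SeqSub xl).
Qed.

Lemma transversal_card_le A E (T1 T2 : finType) (f1 : T1 -> V) (f2 : T2 -> V) :
  lsubmod E -> transversal A E f1 -> transversal A E f2 -> (#|T1| <= #|T2|)%N.
Proof.
move=> hE [A1 I1 _] [_ _ C2].
have /fin_all_exists [g gP] : forall t, exists t2, E (f1 t - f2 t2) by move=> t; apply: C2.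
apply: (leq_card g) => t t' gtt'; apply: I1.
by apply: (lsubmod_subT hE (gP t)); rewrite gtt'; apply: (lsubmod_subC hE (gP t')).
Qed.

Lemma transversal_card A E (T1 T2 : finType) (f1 : T1 -> V) (f2 : T2 -> V) :
  lsubmod E -> transversal A E f1 -> transversal A E f2 -> #|T1| = #|T2|.
Proof.
move=> hE c1 c2; apply/eqP.
by rewrite eqn_leq (transversal_card_le hE c1 c2) (transversal_card_le hE c2 c1).
Qed.

Lemma transversal_tower A B C (T1 T2 : finType) (f1 : T1 -> V) (f2 : T2 -> V) :
  lsubmod A -> lsubmod B -> (forall v, C v -> B v) -> (forall v, B v -> A v) ->
  transversal A B f1 -> transversal B C f2 ->
  transversal A C (fun t : T1 * T2 => f1 t.1 + f2 t.2).
Proof.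
move=> hA hB CB BA [A1 I1 C1] [A2 I2 C2]; split.
- by move=> [t1 t2]; apply: lsubmodD (BA _ (A2 t2)).
- move=> [t1 t2] [t1' t2'] /=; rewrite opprD addrACA => Ct.
  have t1E : t1 = t1'.
    apply: I1; have := lsubmodB hB (CB _ Ct) (lsubmodB hB (A2 t2) (A2 t2')).
    by rewrite addrK.
  by move: Ct; rewrite t1E subrr add0r => /I2 ->.
- move=> a Aa; have [t1 Bt1] := C1 a Aa; have [t2 Ct2] := C2 _ Bt1.
  by exists (t1, t2); rewrite /= opprD addrA.
Qed.

Lemma transversal_map A E A' E' (T : finType) (f : T -> V) (h : V -> V) :
  lsubmod E' -> (forall a, A a -> A' (h a)) ->
  (forall a a', A a -> A a' -> (E (a - a') <-> E' (h a - h a'))) ->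
  (forall a', A' a' -> exists2 a, A a & E' (a' - h a)) ->
  transversal A E f -> transversal A' E' (h \o f).
Proof.
move=> hE' hA hI hS [A1 I1 C1]; split.
- by move=> t; apply: hA.
- by move=> t t' /(hI _ _ (A1 t) (A1 t')) /I1.
- move=> a' A'a'; have [a Aa E'a] := hS a' A'a'; have [t Et] := C1 a Aa.
  by exists t; apply: lsubmod_subT hE' E'a _; apply/(hI _ _ Aa (A1 t)).
Qed.

Lemma transversal_rel_onto A1 E1 A2 E2 (T1 T2 : finType) (f1 : T1 -> V) (f2 : T2 -> V)
    (R : V -> V -> Prop) :
  lsubmod E2 -> transversal A1 E1 f1 -> transversal A2 E2 f2 -> #|T1| = #|T2| ->
  (forall x y, R x y -> A2 y) ->
  (forall x y x' y', R x y -> R x' y' -> E2 (y - y') -> E1 (x - x')) ->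
  (forall x, A1 x -> exists y, R x y) ->
  forall b, A2 b -> exists x y, R x y /\ E2 (b - y).
Proof.
move=> hE2 [A1' I1 _] [_ _ C2] card12 RA2 Rinj Rtot b A2b.
have /fin_all_exists [g gP] : forall t, exists p : V * T2, R (f1 t) p.1 /\ E2 (p.1 - f2 p.2).
  move=> t; have [y Ry] := Rtot _ (A1' t); have [t2 Et2] := C2 y (RA2 _ _ Ry).
  by exists (y, t2).
have g_inj : injective (fun t => (g t).2).
  move=> t t' gtt'; apply: I1; apply: Rinj (gP t).1 (gP t').1 _.
  by apply: (lsubmod_subT hE2 (gP t).2); rewrite gtt'; apply: (lsubmod_subC hE2 (gP t').2).
have [t2 Eb] := C2 b A2b.
have /codomP [t t2E] : t2 \in codom (fun t => (g t).2) by apply: inj_card_onto; rewrite ?card12.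
rewrite {}t2E in Eb.
exists (f1 t), (g t).1; split; first exact: (gP t).1.
by apply: (lsubmod_subT hE2 Eb); apply: (lsubmod_subC hE2 (gP t).2).
Qed.

End Submodules.

Section Uniformiser.
Variables (D : nzRingType) (pi : D) (r : nat).
Hypothesis hD : ncDVR pi.
Notation V := 'rV[D]_r.
Notation piM1 := (piM pi (fun _ : V => True)).
Implicit Types (P Q : V -> Prop) (u v z : V).

Lemma lsubmod_piM P : lsubmod P -> lsubmod (piM pi P).
Proof.
move=> hP; split.
- by exists 0; rewrite scaler0; split=> //; apply: lsubmod0.
- move=> _ _ [u [Pu ->]] [v [Pv ->]].
  by exists (u + v); rewrite scalerDr; split=> //; apply: lsubmodD.
- move=> a _ [u [Pu ->]]; have [b ab] := ncdvr_normal_r hD a.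
  by exists (b *: u); rewrite !scalerA ab; split=> //; apply: lsubmodZ.
Qed.

Lemma lsubmod_add_piM1 P : lsubmod P -> lsubmod (add_piM1 pi P).
Proof.
move=> hP; split.
- by exists 0, 0; rewrite scaler0 addr0; split=> //; apply: lsubmod0.
- move=> _ _ [u [w [Pu ->]]] [u' [w' [Pu' ->]]].
  by exists (u + u'), (w + w'); rewrite scalerDr addrACA; split=> //; apply: lsubmodD.
- move=> a _ [u [w [Pu ->]]]; have [b ab] := ncdvr_normal_r hD a.
  exists (a *: u), (b *: w); rewrite scalerDr !scalerA ab.
  by split=> //; apply: lsubmodZ.
Qed.

Lemma piMS P Q : (forall v, P v -> Q v) -> forall v, piM pi P v -> piM pi Q v.
Proof. by move=> PQ _ [u [Pu ->]]; exists u; split=> //; apply: PQ. Qed.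

Lemma piM_sub P v : lsubmod P -> piM pi P v -> P v.
Proof. by move=> hP [u [Pu ->]]; apply: lsubmodZ. Qed.

Lemma piM_scale P a u : lsubmod P -> inpiD pi a -> P u -> piM pi P (a *: u).
Proof. by move=> hP [d ->] Pu; exists (d *: u); rewrite scalerA; split=> //; apply: lsubmodZ. Qed.

Lemma scale_pi_inj : injective (fun v : V => pi *: v).
Proof.
move=> u v /= /rowP uv; apply/rowP => j; apply/eqP; rewrite -subr_eq0; apply/eqP.
by apply: (ncdvr_regular hD _).1; rewrite mulrBr; have := uv j; rewrite !mxE => ->; rewrite subrr.
Qed.

(* [b] is an inverse of [a] modulo [pi]. *)
Lemma piM_unit_scale P a u z : lsubmod P -> P u -> ~ inpiD pi a ->
  piM pi P (a *: u + z) -> exists b, piM pi P (u + b *: z).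
Proof.
move=> hP Pu a_unit Pauz; have [b [[d bad] _]] := ncdvr_residue_division hD a_unit.
exists b; have ba : b * a = 1 + pi * d by rewrite -bad addrCA subrr addr0.
have := lsubmodB (lsubmod_piM hP) (lsubmodZ b (lsubmod_piM hP) Pauz)
  (piM_scale (a := pi * d) hP (ex_intro _ d erefl) Pu).
by rewrite scalerDr scalerA ba scalerDl scale1r addrAC addrK.
Qed.

Lemma finite_colength_piM1 : finite_colength piM1.
Proof.
have [s0 hs0] := ncdvr_residue_finite hD.
exists [seq \row_j nth 0 s0 (g j) | g : {ffun 'I_r -> 'I_(size s0)}] => v.
have /fin_all_exists [g gP] : forall j : 'I_r,
    exists i : 'I_(size s0), inpiD pi (v ord0 j - nth 0 s0 i).
  move=> j; have [b bs0 vb] := hs0 (v ord0 j).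
  by exists (Ordinal (etrans (index_mem b s0) bs0)); rewrite /= nth_index.
have /fin_all_exists [d dP] := gP.
exists (\row_j nth 0 s0 (g j)).
  by apply/imageP; exists [ffun j => g j] => //; apply/rowP => j; rewrite !mxE ffunE.
by exists (\row_j d j); split=> //; apply/rowP => j; rewrite !mxE dP.
Qed.

Lemma finite_colength_piM P : finite_colength P -> finite_colength (piM pi P).
Proof.
move=> [s hs]; have [s1 hs1] := finite_colength_piM1.
exists [seq t + pi *: w | t <- s1, w <- s] => v.
have [t ts1 [m [_ vtm]]] := hs1 v; have [w ws Pmw] := hs m.
exists (t + pi *: w); first exact: allpairs_f.
by exists (m - w); rewrite scalerBr -vtm opprD addrA.
Qed.

Lemma Mi_piM1 c j u v : piM1 (u - v) -> Mi pi c j v -> Mi pi c j u.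
Proof.
move=> [m [_ uvm]] Mv s; case: (Mv s) => [jc | [d vd]]; [by left | right].
have := congr1 (fun M : V => M ord0 s) uvm; rewrite !mxE => uvms.
by exists (d + m ord0 s); rewrite mulrDr -vd -uvms addrCA subrr addr0.
Qed.

(* [pi P] lies in [pi M_1], which lies in every [M_j]. *)
Lemma in_Mj_iff c j P u : lsubmod P -> P u -> (in_Mj pi c j P u <-> Mi pi c j u).
Proof.
move=> hP Pu; split.
- move=> [x [y [Px Mx Py ->]]]; apply: (Mi_piM1 (v := x)) => //.
  by rewrite addrAC subrr add0r; apply: piMS Py.
- by move=> Mu; exists u, 0; split=> //; [apply: lsubmod0 (lsubmod_piM hP) | rewrite addr0].
Qed.

End Uniformiser.

Section FilteredIso.
Variables (D : nzRingType) (pi : D) (r : nat).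
Hypothesis hD : ncDVR pi.
Notation V := 'rV[D]_r.
Variable X : V -> Prop.
Hypotheses (hX : lsubmod X) (X_fin : finite_colength X).

Notation Y := (add_piM1 pi X).
Notation piX := (piM pi X).
Notation piY := (piM pi Y).
Notation piM1 := (piM pi (fun _ : V => True)).
Notation XpiM1 := (fun v => X v /\ piM1 v).
Implicit Types (R : V -> V -> Prop) (u v w x y : V).

Let hY : lsubmod Y := lsubmod_add_piM1 hD hX.
Let hpiX : lsubmod piX := lsubmod_piM hD hX.
Let hpiY : lsubmod piY := lsubmod_piM hD hY.
Let hpiM1 : lsubmod piM1 := lsubmod_piM hD (lsubmodT D r).

Let hXpiM1 : lsubmod XpiM1.
Proof.
split; first by split; [apply: lsubmod0 | apply: (lsubmod0 hpiM1)].
- by move=> u v [Xu Pu] [Xv Pv]; split; [apply: lsubmodD | apply: (lsubmodD hpiM1)].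
- by move=> a u [Xu Pu]; split; [apply: lsubmodZ | apply: (lsubmodZ a hpiM1)].
Qed.

Lemma X_sub_Y v : X v -> Y v.
Proof. by move=> Xv; exists v, 0; rewrite scaler0 addr0. Qed.

Lemma piM1_sub_Y v : piM1 v -> Y v.
Proof. by move=> [w [_ ->]]; exists 0, w; rewrite add0r; split=> //; apply: lsubmod0. Qed.

Lemma piX_sub_piY v : piX v -> piY v.
Proof. exact: piMS X_sub_Y v. Qed.

(* Count [pi M_1 / pi X] through [X cap pi M_1] and through [pi Y]; multiplication
   by [pi] identifies [pi M_1 / (X cap pi M_1)] with [pi Y / pi X]. *)
Lemma kernel_transversals : exists (T1 T2 : finType) (f1 : T1 -> V) (f2 : T2 -> V),
  [/\ transversal XpiM1 piX f1, transversal piM1 piY f2 & #|T1| = #|T2|].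
Proof.
have fin_piX := finite_colength_piM hD X_fin.
have piX_sub_XpiM1 v : piX v -> X v /\ piM1 v.
  by move=> Pv; split; [apply: piM_sub hX Pv | apply: piMS Pv].
have [T1 [f1 c1]] := transversal_exists XpiM1 hpiX fin_piX.
have [T2 [f2 c2]] := transversal_exists piM1 hpiY (finite_colengthS piX_sub_piY fin_piX).
have [T3 [f3 c3]] := transversal_exists piM1 hXpiM1 (finite_colengthS piX_sub_XpiM1 fin_piX).
have [T4 [f4 c4]] := transversal_exists piY hpiX fin_piX.
have c3pi : transversal piY piX ((fun v => pi *: v) \o f3).
  apply: (transversal_map hpiX _ _ _ c3).
  - by move=> a /piM1_sub_Y Ya; exists a.
  - move=> a a' Pa Pa'; rewrite -scalerBr; split=> [[Xa _] | [x [Xx /scale_pi_inj aa']]].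
      by exists (a - a').
    by split; [rewrite aa' | apply: (lsubmodB hpiM1)].
  - move=> _ [_ [[x [w [Xx ->]]] ->]]; exists (pi *: w); first by exists w.
    by exists x; rewrite scalerDr addrK.
have := transversal_card hpiX
  (transversal_tower hpiM1 hXpiM1 piX_sub_XpiM1 (fun v => @proj2 _ _) c3 c1)
  (transversal_tower hpiM1 hpiY piX_sub_piY (piMS (fun _ _ => I)) c2 c4).
rewrite !card_prod -(transversal_card hpiX c3pi c4) mulnC => /eqP.
have [_ _ /(_ 0 (lsubmod0 hpiM1)) [t3 _]] := c3.
rewrite eqn_pmul2r; last by apply/card_gt0P; exists t3.
by move/eqP=> card12; exists T1, T2, f1, f2.
Qed.

(* The graph, a submodule of [X * Y] containing [pi X * pi Y], of a partial
   isomorphism [X / pi X -> Y / pi Y] commuting with reduction modulo [pi M_1]. *)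
Definition partial_iso R : Prop :=
  [/\ forall x y, R x y -> [/\ X x, Y y & piM1 (y - x)],
      forall x y, R x y -> (piX x <-> piY y),
      forall x y x' y', R x y -> R x' y' -> R (x + x') (y + y'),
      forall a x y, R x y -> R (a *: x) (a *: y)
    & forall x y, piX x -> piY y -> R x y].

Section PartialIso.
Variable R : V -> V -> Prop.
Hypothesis hR : partial_iso R.

Lemma partial_iso_graph x y : R x y -> [/\ X x, Y y & piM1 (y - x)].
Proof. by case: hR => graph _ _ _ _; apply: graph. Qed.

Lemma partial_iso_pi x y : R x y -> (piX x <-> piY y).
Proof. by case: hR => _ pi_iff _ _ _; apply: pi_iff. Qed.

Lemma partial_isoD x y x' y' : R x y -> R x' y' -> R (x + x') (y + y').
Proof. by case: hR => _ _ RD _ _; apply: RD. Qed.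

Lemma partial_isoZ a x y : R x y -> R (a *: x) (a *: y).
Proof. by case: hR => _ _ _ RZ _; apply: RZ. Qed.

Lemma partial_iso_piXY x y : piX x -> piY y -> R x y.
Proof. by case: hR => _ _ _ _ R_pi; apply: R_pi. Qed.

Lemma partial_isoB x y x' y' : R x y -> R x' y' -> R (x - x') (y - y').
Proof. by move=> Rxy Rxy'; rewrite -!scaleN1r; apply/partial_isoD/partial_isoZ. Qed.

Lemma partial_iso_mod x y x' y' : R x y -> R x' y' -> (piX (x - x') <-> piY (y - y')).
Proof. by move=> Rxy Rxy'; apply: partial_iso_pi (partial_isoB Rxy Rxy'). Qed.

Lemma partial_iso_modl x y u : R x y -> piX (u - x) -> R u y.
Proof.
move=> Rxy piXux; have := partial_isoD (partial_iso_piXY piXux (lsubmod0 hpiY)) Rxy.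
by rewrite subrK add0r.
Qed.

Lemma partial_iso_modr x y v : R x y -> piY (v - y) -> R x v.
Proof.
move=> Rxy piYvy; have := partial_isoD (partial_iso_piXY (lsubmod0 hpiX) piYvy) Rxy.
by rewrite subrK add0r.
Qed.

Lemma partial_iso_fun x y y' : R x y -> R x y' -> piY (y - y').
Proof. by move=> Rxy Rxy'; apply/(partial_iso_mod Rxy Rxy'); rewrite subrr; apply: lsubmod0. Qed.

End PartialIso.

Lemma partial_iso0 : partial_iso (fun x y => piX x /\ piY y).
Proof.
split.
- move=> x y [piXx piYy]; split; [exact: piM_sub hX piXx | exact: piM_sub hY piYy |].
  by apply: (lsubmodB hpiM1); apply: piMS (fun _ _ => I) _ _; [exact: piYy | exact: piXx].
- by move=> x y [].
- by move=> x y x' y' [? ?] [? ?]; split; apply: lsubmodD.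
- by move=> a x y [? ?]; split; apply: lsubmodZ.
- by [].
Qed.

Lemma partial_iso_fresh_scale R v v' a x y : partial_iso R -> X v -> Y v' ->
  ~ (exists y, R v y) -> ~ (exists x, R x v') -> R x y ->
  (piX (a *: v + x) <-> piY (a *: v' + y)).
Proof.
move=> hR Xv Yv' v_fresh v'_fresh Rxy.
have [a_pi | a_unit] := classic (inpiD pi a).
  rewrite (lsubmodDl _ hpiX (piM_scale hX a_pi Xv)) (lsubmodDl _ hpiY (piM_scale hY a_pi Yv')).
  exact: partial_iso_pi Rxy.
split=> [piXav | piYav']; exfalso.
- have [b piXvbx] := piM_unit_scale hD hX Xv a_unit piXav.
  apply: v_fresh; exists ((- b) *: y).
  by apply: (partial_iso_modl hR (partial_isoZ hR (- b) Rxy)); rewrite scaleNr opprK.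
- have [b piYvby] := piM_unit_scale hD hY Yv' a_unit piYav'.
  apply: v'_fresh; exists ((- b) *: x).
  by apply: (partial_iso_modr hR (partial_isoZ hR (- b) Rxy)); rewrite scaleNr opprK.
Qed.

Lemma partial_iso_adjoin R v v' : partial_iso R -> X v -> Y v' -> piM1 (v' - v) ->
  ~ (exists y, R v y) -> ~ (exists x, R x v') ->
  exists R', [/\ partial_iso R', forall x y, R x y -> R' x y & R' v v'].
Proof.
move=> hR Xv Yv' v'v v_fresh v'_fresh.
exists (fun x y => exists a x0 y0, [/\ R x0 y0, x = a *: v + x0 & y = a *: v' + y0]).
split.
- split.
  + move=> _ _ [a [x0 [y0 [Rxy0 -> ->]]]]; have [Xx0 Yy0 y0x0] := partial_iso_graph hR Rxy0.
    split; [exact: lsubmodD (lsubmodZ a hX Xv) Xx0 | exact: lsubmodD (lsubmodZ a hY Yv') Yy0 |].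
    by rewrite opprD addrACA -scalerBr; apply: lsubmodD (lsubmodZ a hpiM1 v'v) y0x0.
  + move=> _ _ [a [x0 [y0 [Rxy0 -> ->]]]].
    exact: partial_iso_fresh_scale hR Xv Yv' v_fresh v'_fresh Rxy0.
  + move=> _ _ _ _ [a [x0 [y0 [Rxy0 -> ->]]]] [a' [x0' [y0' [Rxy0' -> ->]]]].
    exists (a + a'), (x0 + x0'), (y0 + y0').
    by rewrite !scalerDl; split; [apply: (partial_isoD hR) | rewrite addrACA..].
  + move=> b _ _ [a [x0 [y0 [Rxy0 -> ->]]]]; exists (b * a), (b *: x0), (b *: y0).
    by rewrite !scalerDr !scalerA; split=> //; apply: (partial_isoZ hR).
  + move=> x y piXx piYy; exists 0, x, y.
    by rewrite !scale0r !add0r; split=> //; apply: (partial_iso_piXY hR).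
- by move=> x y Rxy; exists 0, x, y; rewrite !scale0r !add0r.
- exists 1, 0, 0; rewrite !scale1r !addr0; split=> //.
  by apply: (partial_iso_piXY hR); apply: lsubmod0.
Qed.

Lemma partial_iso_dom_ker R : partial_iso R ->
  (forall y, piM1 y -> exists x, R x y) -> forall x, XpiM1 x -> exists y, R x y.
Proof.
move=> hR onto x Xx; have [T1 [T2 [f1 [f2 [c1 c2 card12]]]]] := kernel_transversals.
pose S y x := R x y /\ piM1 y.
have S_ker y x' : S y x' -> XpiM1 x'.
  move=> [Rxy' y'M1]; have [Xx' _ yx'] := partial_iso_graph hR Rxy'.
  by split=> //; have := lsubmodB hpiM1 y'M1 yx'; rewrite opprB addrC subrK.
have S_inj y x1 y' x1' : S y x1 -> S y' x1' -> piX (x1 - x1') -> piY (y - y').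
  by move=> [Rxy1 _] [Rxy1' _] /(partial_iso_mod hR Rxy1 Rxy1').
have S_total y : piM1 y -> exists x1, S y x1.
  by move=> yM1; have [x1 Rxy1] := onto y yM1; exists x1.
have [y [x' [[Rxy _] xx']]] :=
  transversal_rel_onto hpiX c2 c1 (esym card12) S_ker S_inj S_total Xx.
by exists y; apply: (partial_iso_modl hR Rxy xx').
Qed.

Lemma partial_iso_range_ker R : partial_iso R ->
  (forall x, XpiM1 x -> exists y, R x y) -> forall y, piM1 y -> exists x, R x y.
Proof.
move=> hR total y yM1; have [T1 [T2 [f1 [f2 [c1 c2 card12]]]]] := kernel_transversals.
pose S x y := R x y /\ XpiM1 x.
have S_ker x' y1 : S x' y1 -> piM1 y1.
  move=> [Rxy1 [_ x'M1]]; have [_ _ yx'] := partial_iso_graph hR Rxy1.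
  by have := lsubmodD hpiM1 yx' x'M1; rewrite subrK.
have S_inj x1 y1 x1' y1' : S x1 y1 -> S x1' y1' -> piY (y1 - y1') -> piX (x1 - x1').
  by move=> [Rxy1 _] [Rxy1' _] /(partial_iso_mod hR Rxy1 Rxy1').
have S_total x1 : XpiM1 x1 -> exists y1, S x1 y1.
  by move=> Xx1; have [y1 Rxy1] := total x1 Xx1; exists y1.
have [x [y' [[Rxy' _] yy']]] :=
  transversal_rel_onto hpiY c1 c2 card12 S_ker S_inj S_total yM1.
by exists x; apply: (partial_iso_modr hR Rxy' yy').
Qed.

Lemma partial_iso_fresh_image R v : partial_iso R -> X v -> ~ (exists y, R v y) ->
  exists2 v', Y v' /\ piM1 (v' - v) & ~ (exists x, R x v').
Proof.
move=> hR Xv v_fresh.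
have [[x0 [y0 [Rxy0 vx0]]] | far] := classic (exists x0 y0, R x0 y0 /\ piM1 (v - x0)).
  have [Xx0 Yy0 y0x0] := partial_iso_graph hR Rxy0.
  have [u' [u'M1 u'_fresh]] : exists u', piM1 u' /\ ~ (exists x, R x u').
    apply: NNPP => all_hit; apply: v_fresh.
    have [y Rvy] : exists y, R (v - x0) y.
      apply: (partial_iso_dom_ker hR) => [y yM1 | ]; last by split; [apply: lsubmodB |].
      by apply: NNPP => y_fresh; apply: all_hit; exists y.
    by exists (y + y0); have := partial_isoD hR Rvy Rxy0; rewrite subrK.
  exists (y0 + u'); first split.
  - exact: lsubmodD hY Yy0 (piM1_sub_Y u'M1).
  - have := lsubmodD hpiM1 (lsubmodB hpiM1 y0x0 vx0) u'M1.
    by rewrite opprB addrA subrK addrAC.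
  - move=> [x Rxv']; apply: u'_fresh; exists (x - x0).
    by have := partial_isoB hR Rxv' Rxy0; rewrite addrAC subrr add0r.
exists v; first by split; [apply: X_sub_Y | rewrite subrr; apply: lsubmod0].
move=> [x Rxv]; apply: far; exists x, v; split=> //.
by have [] := partial_iso_graph hR Rxv.
Qed.

Lemma partial_iso_cover (s : seq V) : (forall x, x \in s -> X x) ->
  exists R, partial_iso R /\ forall x, x \in s -> exists y, R x y.
Proof.
elim: s => [_ | v s IH Xs].
  by exists (fun x y => piX x /\ piY y); split=> //; exact: partial_iso0.
have [R [hR Rs]] := IH (fun x xs => Xs x (mem_behead (s := v :: s) xs)).
have Xv := Xs v (mem_head v s).
have [[y Rvy] | v_fresh] := classic (exists y, R v y).
  by exists R; split=> // x; rewrite inE => /predU1P [-> | /Rs //]; exists y.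
have [v' [Yv' v'v] v'_fresh] := partial_iso_fresh_image hR Xv v_fresh.
have [R' [hR' RR' R'vv']] := partial_iso_adjoin hR Xv Yv' v'v v_fresh v'_fresh.
exists R'; split=> // x; rewrite inE => /predU1P [-> | /Rs [y /RR' R'xy]].
  by exists v'.
by exists y.
Qed.

Lemma partial_iso_total : exists R, partial_iso R /\ forall x, X x -> exists y, R x y.
Proof.
have [T [f [fX _ fC]]] := transversal_exists X hpiX (finite_colength_piM hD X_fin).
have fsX x : x \in [seq f t | t : T] -> X x by move=> /imageP [t _ ->].
have [R [hR Rf]] := partial_iso_cover fsX.
exists R; split=> // x Xx; have [t xft] := fC x Xx.
have [y Rfy] : exists y, R (f t) y by apply: Rf; apply: image_f.
by exists y; apply: (partial_iso_modl hR Rfy xft).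
Qed.

Lemma partial_iso_onto R : partial_iso R ->
  (forall x, X x -> exists y, R x y) -> forall y, Y y -> exists x, R x y.
Proof.
move=> hR total _ [x0 [w [Xx0 ->]]]; have [y0 Rxy0] := total x0 Xx0.
have [_ _ y0x0] := partial_iso_graph hR Rxy0.
have [x1 Rx1] : exists x1, R x1 (x0 + pi *: w - y0).
  apply: (partial_iso_range_ker hR); first by move=> x [/total].
  apply: (lsubmod_subT hpiM1 (v := x0)); last exact: lsubmod_subC hpiM1 y0x0.
  by rewrite addrAC subrr add0r; exists w.
by exists (x1 + x0); have := partial_isoD hR Rx1 Rxy0; rewrite subrK.
Qed.

Theorem filtered_iso_add_piM1 n c : filtered_iso pi n c X Y.
Proof.
have [R [hR total]] := partial_iso_total.
pose phi x := epsilon (inhabits 0) (R x).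
have phiP x : X x -> R x (phi x) := fun Xx => epsilon_spec _ _ (total x Xx).
exists phi; split; first by move=> x /phiP /(partial_iso_graph hR) [].
split.
- by move=> x x' /phiP Rx /phiP Rx'; exact: (partial_iso_mod hR Rx Rx').
- move=> x x' Xx Xx'; have Rsum := partial_isoD hR (phiP _ Xx) (phiP _ Xx').
  exact: (partial_iso_fun hR (phiP _ (lsubmodD hX Xx Xx')) Rsum).
- move=> a x Xx.
  exact: (partial_iso_fun hR (phiP _ (lsubmodZ a hX Xx)) (partial_isoZ hR a (phiP _ Xx))).
- move=> y Yy; have [x Rxy] := partial_iso_onto hR total Yy.
  have [Xx _ _] := partial_iso_graph hR Rxy.
  by exists x => //; apply: (partial_iso_fun hR Rxy (phiP _ Xx)).
- move=> j _ x Xx; have [_ Yphix phix_x] := partial_iso_graph hR (phiP _ Xx).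
  rewrite (in_Mj_iff hD c j hX Xx) (in_Mj_iff hD c j hY Yphix).
  by split; apply: Mi_piM1 => //; apply: (lsubmod_subC hpiM1 phix_x).
Qed.

End FilteredIso.

Theorem propositionB2 (D : nzRingType) (pi : D) (n r : nat) (c : 'I_r -> nat)
  (X1 : 'rV[D]_r -> Prop) :
  ncDVR pi ->
  (1 <= n)%N -> (1 <= r)%N ->
  (forall s : 'I_r, (1 <= c s <= n)%N) ->
  (forall s t : 'I_r, (s <= t)%N -> (c s <= c t)%N) ->
  lsubmod X1 -> finite_colength X1 ->
  filtered_iso pi n c X1 (add_piM1 pi X1).
Proof. by move=> hD _ _ _ _ hX X_fin; apply: filtered_iso_add_piM1. Qed.
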